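(* Consider the network and loss from the context with $\alpha^-=0$. Let $\overline{\mathbf{P}}$ be a stationary point of the loss of the network with hidden neurons $I$. Let $\overline{\mathbf{P}}'$ be obtained by adding a finite set $I^-$ of new hidden neurons $i^-$ with input weights $\mathbf{w}_{i^-}$ satisfying $\mathbf{w}_{i^-}\cdot\mathbf{x}_k<0$ for all $k\in K$ and arbitrary output weights $h_{ji^-}$ ($j\in J$), all other parameters unchanged. Then $\overline{\mathbf{P}}'$ is a stationary point of the loss of the widened network (with hidden neurons $I\cup I^-$).
   Context: Fix an integer $d>1$, finite index sets $I$ (hidden), $J$ (output), $K$ (samples), reals $\alpha^+\ne\alpha^-$, and $\rho(z)=\alpha^+z$ for $z\ge0$, $\rho(z)=\alpha^-z$ for $z<0$. For a network with finite hidden index set $\tilde I$, parameters $\mathbf{P}$ consist of $\mathbf{w}_i\in\mathbb{R}^d$ and $h_{ji}\in\mathbb{R}$ ($i\in\tilde I$, $j\in J$), output $\hat{\mathbf{y}}(\mathbf{P};\mathbf{x})_j=\sum_{i\in\tilde I}h_{ji}\rho(\mathbf{w}_i\cdot\mathbf{x})$, and loss $\mathcal{L}(\mathbf{P})=\frac12\sum_{k\in K}\|\hat{\mathbf{y}}(\mathbf{P};\mathbf{x}_k)-\mathbf{y}_k\|^2$ for training data $(\mathbf{x}_k,\mathbf{y}_k)_{k\in K}$. A point $\overline{\mathbf{P}}$ is a stationary point if $\lim_{\alpha\to0^+}\frac{\mathcal{L}(\overline{\mathbf{P}}+\alpha\mathbf{d})-\mathcal{L}(\overline{\mathbf{P}})}{\alpha}\ge0$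 for all directions $\mathbf{d}$ in parameter space. *)

From HB Require Import structures.
From mathcomp Require Import all_boot all_order all_algebra.
From mathcomp Require Import all_classical all_reals.
From mathcomp Require Import topology normedtype.
Set Implicit Arguments. Unset Strict Implicit. Unset Printing Implicit Defensive.
Import Order.TTheory GRing.Theory Num.Theory.
Import numFieldNormedType.Exports.
Local Open Scope ring_scope.
Local Open Scope classical_set_scope.

Section Net.
Variable R : realType.

Definition rho (ap am z : R) : R := if 0 <= z then ap * z else am * z.

Definition dotv (d : nat) (u v : 'rV[R]_d) : R := \sum_(i < d) u ord0 i * v ord0 i.

Record params (Ih J : finType) (d : nat) := Params {
  pw : Ih -> 'rV[R]_d ;
  ph : J -> Ih -> R
}.

Definition padd (Ih J : finType) (d : nat) (P : params Ih J d) (a : R)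
  (D : params Ih J d) : params Ih J d :=
  Params (fun i => pw P i + a *: pw D i) (fun j i => ph P j i + a * ph D j i).

Definition yhat (ap am : R) (Ih J : finType) (d : nat) (P : params Ih J d)
  (x : 'rV[R]_d) (j : J) : R :=
  \sum_(i : Ih) ph P j i * rho ap am (dotv (pw P i) x).

Definition loss (ap am : R) (Ih J K : finType) (d : nat)
  (xs : K -> 'rV[R]_d) (ys : K -> J -> R) (P : params Ih J d) : R :=
  2^-1 * \sum_(k : K) \sum_(j : J) (yhat ap am P (xs k) j - ys k j) ^+ 2.

Definition stationary (ap am : R) (Ih J K : finType) (d : nat)
  (xs : K -> 'rV[R]_d) (ys : K -> J -> R) (P : params Ih J d) : Prop :=
  forall D : params Ih J d, exists l : R,
    ((fun a : R => (loss ap am xs ys (padd P a D) - loss ap am xs ys P) / a)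
       @ 0^'+ --> l) /\ 0 <= l.

Definition widen (Ih Im J : finType) (d : nat) (P : params Ih J d)
  (wm : Im -> 'rV[R]_d) (hm : J -> Im -> R) : params (Ih + Im)%type J d :=
  Params (fun i => match i with inl i => pw P i | inr i => wm i end)
         (fun j i => match i with inl i => ph P j i | inr i => hm j i end).

End Net.

From HB Require Import structures.
From mathcomp Require Import all_boot all_order all_algebra.
From mathcomp Require Import all_classical all_reals.
From mathcomp Require Import topology normedtype.
Set Implicit Arguments. Unset Strict Implicit. Unset Printing Implicit Defensive.
Import Order.TTheory GRing.Theory Num.Theory.
Import numFieldNormedType.Exports.
Local Open Scope ring_scope.
Local Open Scope classical_set_scope.

(* Since rho vanishes on nonpositive inputs when am = 0, a neuron whose input
   weight is negative on every sample contributes nothing to the network's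
   outputs; by strictness and finiteness of K this persists for all small
   perturbations of the weight. Hence, for small a > 0, the loss at
   P' + a D equals the loss of the original network at P + a D_I, where D_I
   is D restricted to the old neurons, and the one-sided directional
   derivative of the widened loss along D is that of the old loss along D_I. *)

Section Widening.
Variables (R : realType) (d : nat) (ap : R).
Implicit Types (x w v : 'rV[R]_d) (a z : R).

Lemma dotvDZ w v x a : dotv (w + a *: v) x = dotv w x + a * dotv v x.
Proof.
rewrite /dotv mulr_sumr -big_split /=; apply: eq_bigr => i _.
by rewrite !mxE mulrDl mulrA.
Qed.

Lemma near_dotv_lt0 w v x :
  dotv w x < 0 -> \forall a \near (0 : R)^'+, dotv (w + a *: v) x < 0.
Proof.
move=> wx_lt0.
have dotv_cvg : dotv (w + a *: v) x @[a --> (0 : R)] --> dotv w x.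
  rewrite (funext (fun a => dotvDZ w v x a)).
  rewrite -[X in _ --> X]addr0 -[X in _ --> _ + X](mul0r (dotv v x)).
  apply: cvgD; first exact: cvg_cst.
  by apply: cvgM; [exact: cvg_id | exact: cvg_cst].
exact: cvgr_lt _ (cvg_at_right_filter dotv_cvg) _ wx_lt0.
Qed.

Lemma rho0_le0 z : z <= 0 -> rho ap 0 z = 0.
Proof.
move=> z_le0; rewrite /rho mul0r; case: ifP => // z_ge0.
by rewrite (@le_anti _ _ z 0) ?z_le0 ?mulr0.
Qed.

Variables (I Im J K : finType) (xs : K -> 'rV[R]_d) (ys : K -> J -> R).

Definition unwiden (Q : params R (I + Im)%type J d) : params R I J d :=
  Params (fun i => pw Q (inl i)) (fun j i => ph Q j (inl i)).

Lemma widenK (P : params R I J d) wm hm : unwiden (widen P wm hm) = P.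
Proof. by case: P. Qed.

Lemma unwidenD (Q D : params R (I + Im)%type J d) a :
  unwiden (padd Q a D) = padd (unwiden Q) a (unwiden D).
Proof. by []. Qed.

Lemma yhat_unwiden (Q : params R (I + Im)%type J d) x :
  (forall i, dotv (pw Q (inr i)) x <= 0) ->
  yhat ap 0 Q x =1 yhat ap 0 (unwiden Q) x.
Proof.
move=> inactive j; rewrite /yhat big_sumType /= [X in _ + X]big1 ?addr0 //.
by move=> i _; rewrite rho0_le0 ?mulr0.
Qed.

Lemma loss_unwiden (Q : params R (I + Im)%type J d) :
  (forall i k, dotv (pw Q (inr i)) (xs k) <= 0) ->
  loss ap 0 xs ys Q = loss ap 0 xs ys (unwiden Q).
Proof.
move=> inactive; rewrite /loss; congr (_ * _).
apply: eq_bigr => k _; apply: eq_bigr => j _.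
by rewrite yhat_unwiden // => i; exact: inactive.
Qed.

End Widening.

Theorem proposition5 (R : realType) (d : nat) (hd : (1 < d)%N)
  (I J K Im : finType) (ap am : R) (hap : ap != am) (ham : am = 0)
  (xs : K -> 'rV[R]_d) (ys : K -> J -> R) (P : params R I J d)
  (hP : stationary ap am xs ys P)
  (wm : Im -> 'rV[R]_d) (hm : J -> Im -> R)
  (hwm : forall (i : Im) (k : K), dotv (wm i) (xs k) < 0) :
  stationary ap am xs ys (widen P wm hm).
Proof.
(* [hd] and [hap] are standing assumptions of the paper, not needed here. *)
move=> D; subst am.
have [l [cvg_l l_ge0]] := hP (unwiden D); exists l; split => //.
have inactive_near : \forall a \near (0 : R)^'+, forall ik : Im * K,
    dotv (pw (padd (widen P wm hm) a D) (inr ik.1)) (xs ik.2) < 0.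
  by apply: filter_forall => -[i k]; exact: near_dotv_lt0 (hwm i k).
apply: cvg_trans cvg_l; apply: near_eq_cvg; apply: filterS inactive_near.
move=> a new_inactive; rewrite /= !loss_unwiden ?unwidenD ?widenK // => i k.
- exact: ltW (hwm i k).
- exact: ltW (new_inactive (i, k)).
Qed.
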